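(* There exists a constant $C_0$ such that for every $m,\ell\ge1$, every choice of $\sigma_1\ge\sigma_2\ge\dots\ge\sigma_m\ge0$, $\rho_1\ge\rho_2\ge\dots\ge\rho_\ell>0$, $b_1,\dots,b_m>0$, $c_1,\dots,c_\ell>0$, every $1\le k\le m$, and both choices of sign, \[ \Bigl|\int_0^{\sqrt{\rho_\ell}}e^{\frac12i\lambda^2}e^{\pm i\sum_{j=1}^mb_j\sqrt{\lambda^2+\sigma_j}}\exp\Bigl(-\sum_{i=1}^\ell c_i\sqrt{\rho_i-\lambda^2}\Bigr)\frac{\lambda}{\sqrt{\lambda^2+\sigma_k}}\,d\lambda\Bigr|\le C_0\min\Bigl[(1+\sigma_1+\rho_\ell)^{1/4},\ m^{3/2}b_k^{-1}\max_{1\le j\le m}b_j\Bigr]. \] *)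

From Stdlib Require Import Reals List.
From Coquelicot Require Import Coquelicot.
Open Scope R_scope.

Definition cis (x : R) : C := (cos x, sin x).

Definition sum1 (f : nat -> R) (n : nat) : R := sum_n_m f 1 n.

Definition max1 (f : nat -> R) (n : nat) : R :=
  fold_right Rmax (f 1%nat) (map f (seq 1 n)).

Definition integrand (m l k : nat) (sigma rho b c : nat -> R) (eps : R)
  (lam : R) : C :=
  Cmult (Cmult (cis (lam ^ 2 / 2))
               (cis (eps * sum1 (fun j => b j * sqrt (lam ^ 2 + sigma j)) m)))
        (RtoC (exp (- sum1 (fun i => c i * sqrt (rho i - lam ^ 2)) l)
               * (lam / sqrt (lam ^ 2 + sigma k)))).

From Stdlib Require Import Reals List Lra Lia.
From Coquelicot Require Import Coquelicot.
Open Scope R_scope.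

(* Both the real and the imaginary part of the integrand have the form
   cos (phi x + th) * (x * (E x * p x)), where E is the damping factor (nondecreasing,
   at most 1), p x = 1 / sqrt (x^2 + sigma_k) (nonincreasing, with x p x <= 1) and
   phi' = x h with h = -eps - sum_j b_j / sqrt (x^2 + sigma_j) nondecreasing.
   On [0, tau] the integrand is bounded by 1, and beyond, p <= 1/tau. Where |h| >= d,
   integrating by parts against (sin (phi + th))' = x h cos (phi + th) gives the
   van der Corput bound 5 p / d; the window where |h| <= d is short in x^2 (at most
   4 d / kap) as soon as h' >= kap x there.
   For eps = 1, h <= -1 and the integral is O(1). For eps = -1, h <= 1/2 forces
   sum_j b_j / sqrt (x^2 + sigma_j) >= 1/2, which yields either kap = 1 / (2 (1 + sigma_1 + rho_l)),
   or, through a single term b_j / sqrt (x^2 + sigma_j) >= 1 / (2 m), kap = 1 / (8 m^3 (max b)^2);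
   optimising tau and d gives the two terms of the minimum. *)

Lemma sum1_O (f : nat -> R) : sum1 f 0 = 0.
Proof. unfold sum1. rewrite sum_n_m_zero; [reflexivity | lia]. Qed.

Lemma sum1_S (f : nat -> R) n : sum1 f (S n) = sum1 f n + f (S n).
Proof. unfold sum1. rewrite sum_n_Sm; [reflexivity | lia]. Qed.

Lemma sum1_scal_l (a : R) (f : nat -> R) n : sum1 (fun j => a * f j) n = a * sum1 f n.
Proof. apply (sum_n_m_mult_l (K := R_Ring)). Qed.

Lemma sum1_le (f g : nat -> R) n :
  (forall j, (1 <= j <= n)%nat -> f j <= g j) -> sum1 f n <= sum1 g n.
Proof.
  induction n as [|n IH]; intros Hfg; rewrite ?sum1_O, ?sum1_S; [lra|].
  assert (sum1 f n <= sum1 g n) by (apply IH; intros; apply Hfg; lia).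
  assert (f (S n) <= g (S n)) by (apply Hfg; lia).
  lra.
Qed.

Lemma sum1_nonneg (f : nat -> R) n :
  (forall j, (1 <= j <= n)%nat -> 0 <= f j) -> 0 <= sum1 f n.
Proof.
  induction n as [|n IH]; intros Hf; rewrite ?sum1_O, ?sum1_S; [lra|].
  assert (0 <= sum1 f n) by (apply IH; intros; apply Hf; lia).
  assert (0 <= f (S n)) by (apply Hf; lia).
  lra.
Qed.

Lemma sum1_ge_term (f : nat -> R) n k :
  (forall j, (1 <= j <= n)%nat -> 0 <= f j) -> (1 <= k <= n)%nat -> f k <= sum1 f n.
Proof.
  induction n as [|n IH]; intros Hf Hk; [lia|]. rewrite sum1_S.
  destruct (Nat.eq_dec k (S n)) as [->|Hkn].
  - assert (0 <= sum1 f n) by (apply sum1_nonneg; intros; apply Hf; lia). lra.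
  - assert (f k <= sum1 f n) by (apply IH; [intros; apply Hf|]; lia).
    assert (0 <= f (S n)) by (apply Hf; lia). lra.
Qed.

Lemma sum1_exists_ge (f : nat -> R) n a :
  (1 <= n)%nat -> INR n * a <= sum1 f n -> exists j, (1 <= j <= n)%nat /\ a <= f j.
Proof.
  induction n as [|n IH]; intros Hn Hsum; [lia|]. rewrite sum1_S, S_INR in Hsum.
  destruct (Rle_lt_dec a (f (S n))) as [Ha|Ha]; [exists (S n); split; [lia|exact Ha]|].
  destruct n as [|n].
  - rewrite sum1_O in Hsum. simpl in Hsum. lra.
  - destruct (IH ltac:(lia) ltac:(lra)) as [j [Hj Hfj]]. exists j. split; [lia|exact Hfj].
Qed.

Lemma nonincreasing_seq_le (u : nat -> R) n :
  (forall j, (1 <= j < n)%nat -> u (S j) <= u j) ->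
  forall i j, (1 <= i <= j)%nat -> (j <= n)%nat -> u j <= u i.
Proof.
  intros Hu i j Hij Hjn. induction j as [|j IH]; [lia|].
  destruct (Nat.eq_dec i (S j)) as [->|Hi]; [lra|].
  assert (u j <= u i) by (apply IH; lia). assert (u (S j) <= u j) by (apply Hu; lia). lra.
Qed.

Lemma max1_ge (u : nat -> R) n j : (1 <= j <= n)%nat -> u j <= max1 u n.
Proof.
  intros Hj. unfold max1.
  assert (Hin : In (u j) (map u (seq 1 n))) by (apply in_map, in_seq; lia).
  induction (map u (seq 1 n)) as [|y ys IH]; simpl in *; [tauto|].
  destruct Hin as [<-|Hin]; [apply Rmax_l|].
  eapply Rle_trans; [apply IH, Hin|apply Rmax_r].
Qed.

Lemma continuous_of_is_derive (f : R -> R) x l : is_derive f x l -> continuous f x.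
Proof. intros Hf. apply (@ex_derive_continuous R_AbsRing R_NormedModule). now exists l. Qed.

Lemma continuous_sum1 (f : nat -> R -> R) n x :
  (forall j, (1 <= j <= n)%nat -> continuous (f j) x) ->
  continuous (fun y => sum1 (fun j => f j y) n) x.
Proof.
  induction n as [|n IH]; intros Hf.
  - apply (continuous_ext (fun _ => 0)); [intro; now rewrite sum1_O|].
    apply continuous_const.
  - apply (continuous_ext (fun y => sum1 (fun j => f j y) n + f (S n) y));
      [intro; now rewrite sum1_S|].
    apply (continuous_plus (fun y => sum1 (fun j => f j y) n) (f (S n)));
      [apply IH; intros; apply Hf|apply Hf]; lia.
Qed.

Lemma is_derive_sum1 (f : nat -> R -> R) (df : nat -> R) n x :
  (forall j, (1 <= j <= n)%nat -> is_derive (f j) x (df j)) ->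
  is_derive (fun y => sum1 (fun j => f j y) n) x (sum1 df n).
Proof.
  induction n as [|n IH]; intros Hf.
  - rewrite sum1_O. apply (is_derive_ext (fun _ => 0)); [intro; now rewrite sum1_O|].
    auto_derive; [exact I|reflexivity].
  - rewrite sum1_S.
    apply (is_derive_ext (fun y => sum1 (fun j => f j y) n + f (S n) y));
      [intro; now rewrite sum1_S|].
    apply (is_derive_plus (fun y => sum1 (fun j => f j y) n) (f (S n)));
      [apply IH; intros; apply Hf|apply Hf]; lia.
Qed.

(* Leaves the nonvanishing side conditions of [/] as goals. *)
Ltac solve_continuous :=
  cbv beta; lazymatch goal with
  | |- continuous (fun _ => ?c) _ => apply continuous_const
  | |- continuous (fun y => y) _ => apply continuous_id
  | |- continuous (fun y => @?f y + @?g y) ?x =>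
      apply (continuous_plus f g x); solve_continuous
  | |- continuous (fun y => @?f y - @?g y) ?x =>
      apply (continuous_minus f g x); solve_continuous
  | |- continuous (fun y => @?f y * @?g y) ?x =>
      apply (continuous_mult f g x); solve_continuous
  | |- continuous (fun y => @?f y / @?g y) ?x =>
      apply (continuous_mult f (fun y => / g y) x); solve_continuous
  | |- continuous (fun y => - @?f y) ?x =>
      apply (continuous_opp f x); solve_continuous
  | |- continuous (fun y => / @?f y) ?x =>
      apply (continuous_Rinv_comp f x); [solve_continuous|]
  | |- continuous (fun y => @?f y ^ ?n) ?x =>
      apply (continuous_comp f (fun z => z ^ n) x);
      [solve_continuous
      |apply (@ex_derive_continuous R_AbsRing R_NormedModule); auto_derive; exact I]
  | |- continuous (fun y => sin (@?f y)) ?x =>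
      apply (continuous_sin_comp f x); solve_continuous
  | |- continuous (fun y => cos (@?f y)) ?x =>
      apply (continuous_cos_comp f x); solve_continuous
  | |- continuous (fun y => exp (@?f y)) ?x =>
      apply (continuous_exp_comp f x); solve_continuous
  | |- continuous (fun y => sqrt (@?f y)) ?x =>
      apply (continuous_sqrt_comp f x); solve_continuous
  | |- continuous (fun y => sum1 (@?f y) ?n) ?x =>
      apply (continuous_sum1 (fun j y => f y j) n x); intros ? ?; solve_continuous
  | |- _ => try assumption
  end.

(* [auto_derive] leaves [Derive f x] for functions it cannot unfold; replace it using an
   [is_derive f x _] hypothesis. *)
Ltac rewrite_Derive :=
  repeat match goal with
  | |- context [Derive ?f ?x] => erewrite (is_derive_unique f x) by eassumption
  end.

Lemma derive_nonneg_le (f f' : R -> R) a b :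
  a <= b ->
  (forall x, a <= x <= b -> is_derive f x (f' x)) ->
  (forall x, a <= x <= b -> 0 <= f' x) -> f a <= f b.
Proof.
  intros Hab Hd Hpos.
  destruct (MVT_gen f a b f') as [c [Hc Hfc]];
    rewrite ?Rmin_left, ?Rmax_right in * by lra.
  - intros x Hx. apply Hd. lra.
  - intros x Hx. apply continuity_pt_filterlim, (continuous_of_is_derive f x (f' x)), Hd. lra.
  - assert (0 <= f' c) by (apply Hpos; lra). nra.
Qed.

Lemma nondecreasing_level_split (h : R -> R) a b y :
  a <= b ->
  (forall x, a <= x <= b -> continuous h x) ->
  (forall u v, a <= u -> u <= v -> v <= b -> h u <= h v) ->
  exists t, a <= t <= b /\
    (a < t -> forall x, a <= x <= t -> h x <= y) /\
    (t < b -> forall x, t <= x <= b -> y <= h x).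
Proof.
  intros Hab Hc Hmono.
  destruct (Rle_dec y (h a)) as [Hya|Hya].
  { exists a. split; [lra|split; [lra|]].
    intros _ x Hx. specialize (Hmono a x). lra. }
  destruct (Rle_dec (h b) y) as [Hby|Hby].
  { exists b. split; [lra|split; [|lra]].
    intros _ x Hx. specialize (Hmono x b). lra. }
  destruct (Ranalysis5.IVT_interv (fun x => h x - y) a b) as [t [Ht Hty]].
  - intros x Hx. apply continuity_pt_filterlim.
    apply (continuous_minus h (fun _ => y)); [apply Hc; lra|apply continuous_const].
  - destruct (Rle_lt_or_eq_dec a b Hab) as [|<-]; [assumption|lra].
  - lra.
  - lra.
  - exists t. split; [lra|split].
    + intros _ x Hx. specialize (Hmono x t). lra.
    + intros _ x Hx. specialize (Hmono t x). lra.
Qed.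

Lemma RInt_abs_le_variation (f W W' : R -> R) a b :
  a <= b -> ex_RInt f a b ->
  (forall x, a <= x <= b -> is_derive W x (W' x)) ->
  (forall x, a <= x <= b -> continuous W' x) ->
  (forall x, a <= x <= b -> Rabs (f x) <= W' x) ->
  Rabs (RInt f a b) <= W b - W a.
Proof.
  intros Hab Hf HW HW' Hle.
  apply (norm_RInt_le f W' a b); [exact Hab|exact Hle| |].
  - apply (RInt_correct (V := R_CompleteNormedModule)). exact Hf.
  - apply (is_RInt_derive W W'); rewrite ?Rmin_left, ?Rmax_right by lra; assumption.
Qed.

Lemma RInt_abs_le_linear (f : R -> R) a b P :
  a <= b -> ex_RInt f a b ->
  (forall x, a <= x <= b -> Rabs (f x) <= P * x) ->
  Rabs (RInt f a b) <= P * (b ^ 2 - a ^ 2) / 2.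
Proof.
  intros Hab Hf Hle.
  replace (P * (b ^ 2 - a ^ 2) / 2) with (P * b ^ 2 / 2 - P * a ^ 2 / 2) by field.
  apply (RInt_abs_le_variation f (fun x => P * x ^ 2 / 2) (fun x => P * x)); auto.
  - intros x _. auto_derive; [exact I|field].
  - intros x _. solve_continuous.
Qed.

Lemma RInt_abs_le_of_lt (f : R -> R) a b B :
  a <= b -> 0 <= B -> (a < b -> Rabs (RInt f a b) <= B) -> Rabs (RInt f a b) <= B.
Proof.
  intros Hab HB Hlt. destruct (Rle_lt_or_eq_dec a b Hab) as [|<-]; [now apply Hlt|].
  rewrite RInt_point. change (Rabs 0 <= B). now rewrite Rabs_R0.
Qed.

Lemma RInt_abs_le_Chasles (f : R -> R) a b c :
  a <= b <= c -> ex_RInt f a c ->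
  Rabs (RInt f a c) <= Rabs (RInt f a b) + Rabs (RInt f b c).
Proof.
  intros Habc Hf. rewrite <- (RInt_Chasles f a b c).
  - apply Rabs_triang.
  - apply (ex_RInt_Chasles_1 f a b c); assumption.
  - apply (ex_RInt_Chasles_2 f a b c); assumption.
Qed.

Lemma clamp_cut lo hi s :
  0 <= lo <= hi -> 0 <= s -> exists c, lo <= c <= hi /\ c - lo <= s /\ (c < hi -> s <= c).
Proof.
  intros Hlh Hs. exists (Rmax lo (Rmin s hi)).
  unfold Rmax, Rmin. repeat destruct Rle_dec; lra.
Qed.

Lemma Rabs_div_le u U v d :
  0 < d -> d <= Rabs v -> Rabs u <= U -> Rabs (u / v) <= U / d.
Proof.
  intros Hd Hv Hu. assert (v <> 0) by (intro; subst; rewrite Rabs_R0 in Hv; lra).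
  rewrite Rabs_div by assumption. unfold Rdiv.
  apply Rmult_le_compat; [apply Rabs_pos | | exact Hu |].
  - apply Rlt_le, Rinv_0_lt_compat. lra.
  - apply Rinv_le_contravar; assumption.
Qed.

Lemma Rabs_sin_mul_le a v : Rabs (sin a * v) <= Rabs v.
Proof.
  rewrite Rabs_mult. pose proof (Rabs_pos v).
  assert (Rabs (sin a) <= 1) by apply Rabs_le, SIN_bound. nra.
Qed.

Lemma Rabs_cos_mul_le a u U : 0 <= u <= U -> Rabs (cos a * u) <= U.
Proof.
  intros Hu. rewrite Rabs_mult, (Rabs_pos_eq u) by lra.
  pose proof (Rabs_pos (cos a)). assert (Rabs (cos a) <= 1) by apply Rabs_le, COS_bound.
  nra.
Qed.

Section OscillatoryIntegral.

Variables (phi h h' E E' p p' : R -> R) (lo hi : R).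

Hypothesis lo_pos : 0 < lo.
Hypothesis phi_deriv : forall x, lo <= x <= hi -> is_derive phi x (x * h x).
Hypothesis h_deriv : forall x, lo <= x <= hi -> is_derive h x (h' x).
Hypothesis E_deriv : forall x, lo <= x <= hi -> is_derive E x (E' x).
Hypothesis p_deriv : forall x, lo <= x <= hi -> is_derive p x (p' x).
Hypothesis h'_continuous : forall x, lo <= x <= hi -> continuous h' x.
Hypothesis E'_continuous : forall x, lo <= x <= hi -> continuous E' x.
Hypothesis p'_continuous : forall x, lo <= x <= hi -> continuous p' x.
Hypothesis h'_nonneg : forall x, lo <= x <= hi -> 0 <= h' x.
Hypothesis E'_nonneg : forall x, lo <= x <= hi -> 0 <= E' x.
Hypothesis p'_nonpos : forall x, lo <= x <= hi -> p' x <= 0.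
Hypothesis E_range : forall x, lo <= x <= hi -> 0 <= E x <= 1.
Hypothesis p_pos : forall x, lo <= x <= hi -> 0 < p x.
Hypothesis xp_le_1 : forall x, lo <= x <= hi -> x * p x <= 1.

Definition osc (th x : R) : R := cos (phi x + th) * (x * (E x * p x)).

Lemma ex_RInt_osc th a b : lo <= a -> a <= b -> b <= hi -> ex_RInt (osc th) a b.
Proof.
  intros Ha Hab Hb. apply (ex_RInt_continuous (V := R_CompleteNormedModule)).
  intros x Hx. rewrite Rmin_left, Rmax_right in Hx by lra.
  assert (Hx' : lo <= x <= hi) by lra.
  pose proof (continuous_of_is_derive _ _ _ (phi_deriv x Hx')).
  pose proof (continuous_of_is_derive _ _ _ (E_deriv x Hx')).
  pose proof (continuous_of_is_derive _ _ _ (p_deriv x Hx')).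
  unfold osc. solve_continuous.
Qed.

Lemma osc_abs_le th x P : lo <= x <= hi -> p x <= P -> Rabs (osc th x) <= P * x.
Proof.
  intros Hx HP. pose proof (E_range x Hx). pose proof (p_pos x Hx).
  apply Rabs_cos_mul_le. split; [apply Rmult_le_pos; nra|].
  rewrite (Rmult_comm P). apply Rmult_le_compat_l; nra.
Qed.

Lemma osc_abs_le_1 th x : lo <= x <= hi -> Rabs (osc th x) <= 1.
Proof.
  intros Hx. pose proof (E_range x Hx). pose proof (p_pos x Hx). pose proof (xp_le_1 x Hx).
  apply Rabs_cos_mul_le. split; [apply Rmult_le_pos; nra|nra].
Qed.

Lemma h_nondecreasing u v : lo <= u -> u <= v -> v <= hi -> h u <= h v.
Proof.
  intros Hu Huv Hv. apply (derive_nonneg_le h h'); [lra| |]; intros x Hx.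
  - apply h_deriv; lra.
  - apply h'_nonneg; lra.
Qed.

Lemma p_nonincreasing u v : lo <= u -> u <= v -> v <= hi -> p v <= p u.
Proof.
  intros Hu Huv Hv. cut (- p u <= - p v); [lra|].
  apply (derive_nonneg_le (fun x => - p x) (fun x => - p' x)); [lra| |]; intros x Hx.
  - apply (is_derive_opp p). apply p_deriv; lra.
  - specialize (p'_nonpos x ltac:(lra)). lra.
Qed.

Lemma h_level_split a b y :
  lo <= a -> a <= b -> b <= hi ->
  exists t, a <= t <= b /\
    (a < t -> forall x, a <= x <= t -> h x <= y) /\
    (t < b -> forall x, t <= x <= b -> y <= h x).
Proof.
  intros Ha Hab Hb. apply nondecreasing_level_split; [lra| |].
  - intros x Hx. apply (continuous_of_is_derive h x (h' x)), h_deriv. lra.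
  - intros u v Hu Huv Hv. apply h_nondecreasing; lra.
Qed.

Definition amp x := E x * p x / h x.
Definition amp' x := E' x * p x / h x + E x * p' x / h x - E x * p x * h' x / h x ^ 2.

Lemma amp_deriv x : lo <= x <= hi -> h x <> 0 -> is_derive amp x (amp' x).
Proof.
  intros Hx Hh. pose proof (h_deriv x Hx). pose proof (E_deriv x Hx). pose proof (p_deriv x Hx).
  unfold amp, amp'. auto_derive; [repeat split; try (eexists; eassumption); assumption|].
  rewrite_Derive. field. exact Hh.
Qed.

Lemma amp'_continuous x : lo <= x <= hi -> h x <> 0 -> continuous amp' x.
Proof.
  intros Hx Hh.
  pose proof (continuous_of_is_derive _ _ _ (h_deriv x Hx)).
  pose proof (continuous_of_is_derive _ _ _ (E_deriv x Hx)).
  pose proof (continuous_of_is_derive _ _ _ (p_deriv x Hx)).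
  pose proof (h'_continuous x Hx). pose proof (E'_continuous x Hx). pose proof (p'_continuous x Hx).
  unfold amp'. solve_continuous; auto using pow_nonzero.
Qed.

Lemma ex_RInt_sin_amp' th a b :
  lo <= a -> a <= b -> b <= hi -> (forall x, a <= x <= b -> h x <> 0) ->
  ex_RInt (fun x => sin (phi x + th) * amp' x) a b.
Proof.
  intros Ha Hab Hb Hh. apply (ex_RInt_continuous (V := R_CompleteNormedModule)).
  intros x Hx. rewrite Rmin_left, Rmax_right in Hx by lra.
  pose proof (continuous_of_is_derive _ _ _ (phi_deriv x ltac:(lra))).
  pose proof (amp'_continuous x ltac:(lra) (Hh x Hx)).
  solve_continuous.
Qed.

Lemma RInt_osc_by_parts th a b :
  lo <= a -> a <= b -> b <= hi -> (forall x, a <= x <= b -> h x <> 0) ->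
  RInt (osc th) a b = sin (phi b + th) * amp b - sin (phi a + th) * amp a
                      - RInt (fun x => sin (phi x + th) * amp' x) a b.
Proof.
  intros Ha Hab Hb Hh. apply is_RInt_unique.
  apply (is_RInt_ext (fun x => scal (cos (phi x + th) * (x * h x)) (amp x))).
  { intros x Hx. rewrite Rmin_left, Rmax_right in Hx by lra.
    unfold osc, amp. change scal with Rmult.
    match goal with |- ?u = ?v => change (@eq R u v) end.
    field. apply Hh. lra. }
  apply (is_RInt_scal_derive_l (fun x => sin (phi x + th)) amp
    (fun x => cos (phi x + th) * (x * h x)) amp' a b);
    rewrite ?Rmin_left, ?Rmax_right by lra; [intros x Hx..|].
  - pose proof (phi_deriv x ltac:(lra)).
    auto_derive; [eexists; eassumption|]. rewrite_Derive. ring.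
  - apply amp_deriv; [lra|apply Hh, Hx].
  - pose proof (continuous_of_is_derive _ _ _ (phi_deriv x ltac:(lra))).
    pose proof (continuous_of_is_derive _ _ _ (h_deriv x ltac:(lra))).
    solve_continuous.
  - apply amp'_continuous; [lra|apply Hh, Hx].
  - apply (RInt_correct (V := R_CompleteNormedModule) (fun x => sin (phi x + th) * amp' x)).
    apply ex_RInt_sin_amp'; assumption.
Qed.

Lemma amp_abs_le a d x :
  0 < d -> lo <= a <= x -> x <= hi -> d <= Rabs (h x) -> Rabs (amp x) <= p a / d.
Proof.
  intros Hd Hax Hx Hhx. pose proof (E_range x ltac:(lra)). pose proof (p_pos x ltac:(lra)).
  pose proof (p_nonincreasing a x ltac:(lra) ltac:(lra) ltac:(lra)).
  apply Rabs_div_le; [exact Hd|exact Hhx|]. rewrite Rabs_pos_eq by nra. nra.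
Qed.

Definition majorant a d x := E x * p a / d - p x / d - p a / h x.
Definition majorant' a d x := E' x * p a / d - p' x / d + p a * h' x / h x ^ 2.

Lemma majorant_deriv a d x :
  0 < d -> lo <= x <= hi -> h x <> 0 -> is_derive (majorant a d) x (majorant' a d x).
Proof.
  intros Hd Hx Hh. pose proof (h_deriv x Hx). pose proof (E_deriv x Hx). pose proof (p_deriv x Hx).
  unfold majorant, majorant'. auto_derive; [repeat split; try (eexists; eassumption); assumption|].
  rewrite_Derive. field. split; [exact Hh|lra].
Qed.

Lemma majorant'_continuous a d x : lo <= x <= hi -> h x <> 0 -> continuous (majorant' a d) x.
Proof.
  intros Hx Hh. pose proof (continuous_of_is_derive _ _ _ (h_deriv x Hx)).
  pose proof (h'_continuous x Hx). pose proof (E'_continuous x Hx). pose proof (p'_continuous x Hx).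
  unfold majorant'. solve_continuous; auto using pow_nonzero.
Qed.

Lemma amp'_abs_le a d x :
  0 < d -> lo <= a <= x -> x <= hi -> d <= Rabs (h x) -> Rabs (amp' x) <= majorant' a d x.
Proof.
  intros Hd Hax Hx Hhx. assert (Hx' : lo <= x <= hi) by lra.
  pose proof (E_range x Hx'). pose proof (p_pos x Hx'). pose proof (E'_nonneg x Hx').
  pose proof (p'_nonpos x Hx'). pose proof (h'_nonneg x Hx').
  pose proof (p_nonincreasing a x ltac:(lra) ltac:(lra) ltac:(lra)).
  assert (0 < h x ^ 2).
  { apply pow2_gt_0. intros Hh0. rewrite Hh0, Rabs_R0 in Hhx. lra. }
  unfold amp', majorant', Rminus.
  eapply Rle_trans; [apply Rabs_triang|]. rewrite Rabs_Ropp.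
  apply Rplus_le_compat; [eapply Rle_trans; [apply Rabs_triang|]; apply Rplus_le_compat|].
  - apply Rabs_div_le; [exact Hd|exact Hhx|]. rewrite Rabs_pos_eq by nra. nra.
  - replace (- (p' x / d)) with (- p' x / d) by (unfold Rdiv; ring).
    apply Rabs_div_le; [exact Hd|exact Hhx|]. rewrite Rabs_left1 by nra. nra.
  - assert (E x * p x <= p a) by nra.
    assert (0 <= / h x ^ 2) by (apply Rlt_le, Rinv_0_lt_compat; lra).
    unfold Rdiv. rewrite Rabs_pos_eq by (repeat apply Rmult_le_pos; lra).
    apply Rmult_le_compat_r; [lra|]. apply Rmult_le_compat_r; lra.
Qed.

Lemma majorant_increment a b d :
  lo <= a -> a <= b -> b <= hi -> 0 < d ->
  (forall x, a <= x <= b -> d <= h x) \/ (forall x, a <= x <= b -> h x <= - d) ->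
  majorant a d b - majorant a d a <= 3 * (p a / d).
Proof.
  intros Ha Hab Hb Hd Hsep. assert (Ha' : a <= a <= b) by lra. assert (Hb' : a <= b <= b) by lra.
  pose proof (E_range a ltac:(lra)). pose proof (E_range b ltac:(lra)).
  pose proof (p_pos a ltac:(lra)). pose proof (p_pos b ltac:(lra)).
  assert (Hinv : / h a - / h b <= / d /\ h a <> 0 /\ h b <> 0).
  { destruct Hsep as [Hpos|Hneg].
    - pose proof (Hpos a Ha'). pose proof (Hpos b Hb').
      assert (/ h a <= / d) by (apply Rinv_le_contravar; lra).
      assert (0 < / h b) by (apply Rinv_0_lt_compat; lra). repeat split; lra.
    - pose proof (Hneg a Ha'). pose proof (Hneg b Hb').
      assert (/ h a < 0) by (apply Rinv_lt_0_compat; lra).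
      assert (/ - h b <= / d) by (apply Rinv_le_contravar; lra).
      rewrite Rinv_opp in *. repeat split; lra. }
  destruct Hinv as [Hinv [Hha Hhb]].
  replace (majorant a d b - majorant a d a) with
    ((E b - E a) * (p a / d) + p a / d - p b / d + p a * (/ h a - / h b))
    by (unfold majorant; field; repeat split; assumption || lra).
  assert (0 < p a / d) by (apply Rdiv_lt_0_compat; lra).
  assert (0 <= p b / d) by (apply Rlt_le, Rdiv_lt_0_compat; lra).
  assert ((E b - E a) * (p a / d) <= p a / d) by nra.
  assert (p a * (/ h a - / h b) <= p a / d) by (unfold Rdiv; apply Rmult_le_compat_l; lra).
  lra.
Qed.

Lemma RInt_osc_nonstationary th a b d :
  lo <= a -> a <= b -> b <= hi -> 0 < d ->
  (forall x, a <= x <= b -> d <= h x) \/ (forall x, a <= x <= b -> h x <= - d) ->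
  Rabs (RInt (osc th) a b) <= 5 * p a / d.
Proof.
  intros Ha Hab Hb Hd Hsep.
  assert (h_abs : forall x, a <= x <= b -> d <= Rabs (h x)).
  { intros x Hx. destruct Hsep as [H|H]; specialize (H x Hx);
      unfold Rabs; destruct Rcase_abs; lra. }
  assert (h_neq0 : forall x, a <= x <= b -> h x <> 0).
  { intros x Hx Hx0. specialize (h_abs x Hx). rewrite Hx0, Rabs_R0 in h_abs. lra. }
  assert (variation : Rabs (RInt (fun x => sin (phi x + th) * amp' x) a b)
                      <= majorant a d b - majorant a d a).
  { apply (RInt_abs_le_variation _ (majorant a d) (majorant' a d));
      [exact Hab|apply ex_RInt_sin_amp'; assumption| | |];
      intros x Hx.
    - apply majorant_deriv; [exact Hd|lra|apply h_neq0, Hx].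
    - apply majorant'_continuous; [lra|apply h_neq0, Hx].
    - eapply Rle_trans; [apply Rabs_sin_mul_le|apply amp'_abs_le; try lra; apply h_abs, Hx]. }
  pose proof (majorant_increment a b d Ha Hab Hb Hd Hsep).
  pose proof (Rle_trans _ _ _ (Rabs_sin_mul_le (phi a + th) (amp a))
                (amp_abs_le a d a Hd ltac:(lra) ltac:(lra) (h_abs a ltac:(lra)))).
  pose proof (Rle_trans _ _ _ (Rabs_sin_mul_le (phi b + th) (amp b))
                (amp_abs_le a d b Hd ltac:(lra) ltac:(lra) (h_abs b ltac:(lra)))).
  rewrite RInt_osc_by_parts by assumption. unfold Rminus.
  eapply Rle_trans; [apply Rabs_triang|]. rewrite Rabs_Ropp.
  eapply Rle_trans; [apply Rplus_le_compat_r, Rabs_triang|]. rewrite Rabs_Ropp.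
  unfold Rdiv in *. lra.
Qed.

(* [h - kap x^2 / 2] is nondecreasing, so the window where |h| <= d is short in x^2. *)
Lemma RInt_osc_stationary th a b d kap P :
  lo <= a -> a <= b -> b <= hi -> 0 < kap ->
  (forall x, a <= x <= b -> - d <= h x <= d) ->
  (forall x, a <= x <= b -> kap * x <= h' x) ->
  (forall x, a <= x <= b -> p x <= P) ->
  Rabs (RInt (osc th) a b) <= 2 * P * d / kap.
Proof.
  intros Ha Hab Hb Hkap Hd Hh' HP.
  assert (HP0 : 0 < P) by (apply Rlt_le_trans with (p a); [apply p_pos|apply HP]; lra).
  assert (window : kap * b ^ 2 / 2 - kap * a ^ 2 / 2 <= h b - h a).
  { cut (h a - kap * a ^ 2 / 2 <= h b - kap * b ^ 2 / 2); [lra|].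
    apply (derive_nonneg_le (fun x => h x - kap * x ^ 2 / 2) (fun x => h' x - kap * x));
      [lra| |]; intros x Hx.
    - pose proof (h_deriv x ltac:(lra)).
      auto_derive; [eexists; eassumption|]. rewrite_Derive. field.
    - specialize (Hh' x Hx). lra. }
  pose proof (Hd a ltac:(lra)). pose proof (Hd b ltac:(lra)).
  assert (Hsq : b ^ 2 - a ^ 2 <= 4 * d / kap).
  { apply (Rmult_le_reg_l kap); [exact Hkap|]. unfold Rdiv. field_simplify; lra. }
  eapply Rle_trans.
  - apply RInt_abs_le_linear; [exact Hab|apply ex_RInt_osc; lra|].
    intros x Hx. apply osc_abs_le; [lra|apply HP, Hx].
  - replace (2 * P * d / kap) with (P * (4 * d / kap) / 2) by (field; lra).
    unfold Rdiv. apply Rmult_le_compat_r; [lra|]. apply Rmult_le_compat_l; lra.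
Qed.

Lemma RInt_osc_tail th c tau P kap d :
  lo <= c <= hi -> 0 < tau -> 0 < d <= 1/2 -> 0 < kap ->
  0 <= P ->
  (forall x, c <= x <= hi -> p x <= / tau) ->
  (forall x, c <= x <= hi -> -1/2 <= h x -> p x <= P) ->
  (forall x, c <= x <= hi -> h x <= 1/2 -> kap * x <= h' x) ->
  Rabs (RInt (osc th) c hi) <= 10 / tau + 10 * P / d + 2 * P * d / kap.
Proof.
  intros Hc Htau Hd Hkap HP0 Htail HP Hh'.
  destruct (h_level_split c hi (-1/2)) as [t1 [Ht1 [below1 above1]]]; try lra.
  destruct (h_level_split t1 hi (- d)) as [t2 [Ht2 [below2 above2]]]; try lra.
  destruct (h_level_split t2 hi d) as [t3 [Ht3 [below3 above3]]]; try lra.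
  assert (piece1 : Rabs (RInt (osc th) c t1) <= 10 / tau).
  { apply RInt_abs_le_of_lt; [lra|apply Rlt_le, Rdiv_lt_0_compat; lra|]. intros Hlt.
    eapply Rle_trans; [apply (RInt_osc_nonstationary th c t1 (1/2)); try lra|].
    - right. intros x Hx. specialize (below1 Hlt x Hx). lra.
    - pose proof (Htail c ltac:(lra)). unfold Rdiv. lra. }
  assert (piece2 : Rabs (RInt (osc th) t1 t2) <= 5 * P / d).
  { apply RInt_abs_le_of_lt; [lra|apply Rmult_le_pos; [lra|apply Rlt_le, Rinv_0_lt_compat; lra]|].
    intros Hlt.
    eapply Rle_trans; [apply (RInt_osc_nonstationary th t1 t2 d); try lra|].
    - right. exact (below2 Hlt).
    - assert (p t1 <= P) by (apply HP; [lra|apply above1; lra]).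
      unfold Rdiv. apply Rmult_le_compat_r; [apply Rlt_le, Rinv_0_lt_compat|]; lra. }
  assert (piece3 : Rabs (RInt (osc th) t2 t3) <= 2 * P * d / kap).
  { apply RInt_abs_le_of_lt; [lra|apply Rmult_le_pos; [nra|apply Rlt_le, Rinv_0_lt_compat; lra]|].
    intros Hlt.
    assert (Hwin : forall x, t2 <= x <= t3 -> - d <= h x <= d).
    { intros x Hx. split; [apply above2|apply below3]; lra. }
    apply (RInt_osc_stationary th t2 t3 d kap P); [lra|lra|lra|lra|exact Hwin| |].
    - intros x Hx. apply Hh'; [lra|]. specialize (Hwin x Hx). lra.
    - intros x Hx. apply HP; [lra|]. specialize (Hwin x Hx). lra. }
  assert (piece4 : Rabs (RInt (osc th) t3 hi) <= 5 * P / d).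
  { apply RInt_abs_le_of_lt; [lra|apply Rmult_le_pos; [lra|apply Rlt_le, Rinv_0_lt_compat; lra]|].
    intros Hlt.
    eapply Rle_trans; [apply (RInt_osc_nonstationary th t3 hi d); try lra|].
    - left. exact (above3 Hlt).
    - assert (p t3 <= P) by (apply HP; [lra|]; pose proof (above3 Hlt t3 ltac:(lra)); lra).
      unfold Rdiv. apply Rmult_le_compat_r; [apply Rlt_le, Rinv_0_lt_compat|]; lra. }
  pose proof (RInt_abs_le_Chasles (osc th) c t1 hi ltac:(lra)
    (ex_RInt_osc th c hi ltac:(lra) ltac:(lra) ltac:(lra))).
  pose proof (RInt_abs_le_Chasles (osc th) t1 t2 hi ltac:(lra)
    (ex_RInt_osc th t1 hi ltac:(lra) ltac:(lra) ltac:(lra))).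
  pose proof (RInt_abs_le_Chasles (osc th) t2 t3 hi ltac:(lra)
    (ex_RInt_osc th t2 hi ltac:(lra) ltac:(lra) ltac:(lra))).
  unfold Rdiv in *. lra.
Qed.

Lemma RInt_osc_le_head th c :
  lo <= c <= hi -> Rabs (RInt (osc th) lo hi) <= (c - lo) + Rabs (RInt (osc th) c hi).
Proof.
  intros Hc.
  assert (Rabs (RInt (osc th) lo c) <= (c - lo) * 1).
  { apply abs_RInt_le_const; [lra|apply ex_RInt_osc; lra|].
    intros x Hx. apply osc_abs_le_1. lra. }
  pose proof (RInt_abs_le_Chasles (osc th) lo c hi Hc
    (ex_RInt_osc th lo hi ltac:(lra) ltac:(lra) ltac:(lra))).
  lra.
Qed.

Lemma RInt_osc_le th s tau P kap d :
  lo <= hi -> 0 <= s <= tau -> 0 < tau -> 0 < d <= 1/2 -> 0 < kap -> 0 <= P ->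
  (forall x, lo <= x <= hi -> s <= x -> p x <= / tau) ->
  (forall x, lo <= x <= hi -> s <= x -> -1/2 <= h x -> p x <= P) ->
  (forall x, lo <= x <= hi -> h x <= 1/2 -> kap * x <= h' x) ->
  Rabs (RInt (osc th) lo hi) <= tau + 10 / tau + 10 * P / d + 2 * P * d / kap.
Proof.
  intros Hlh Hs Htau Hd Hkap HP0 Htail HP Hh'.
  destruct (clamp_cut lo hi s) as [c [Hc [Hcs Hsc]]]; [lra|lra|].
  pose proof (RInt_osc_le_head th c ltac:(lra)).
  assert (tail : Rabs (RInt (osc th) c hi) <= 10 / tau + 10 * P / d + 2 * P * d / kap).
  { assert (0 <= 10 / tau) by (apply Rmult_le_pos; [lra|apply Rlt_le, Rinv_0_lt_compat; lra]).
    assert (0 <= 10 * P / d) by (apply Rmult_le_pos; [nra|apply Rlt_le, Rinv_0_lt_compat; lra]).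
    assert (0 <= 2 * P * d / kap)
      by (apply Rmult_le_pos; [nra|apply Rlt_le, Rinv_0_lt_compat; lra]).
    apply RInt_abs_le_of_lt; [lra|lra|]. intros Hlt. specialize (Hsc Hlt).
    apply RInt_osc_tail; [lra|lra|lra|lra|lra| | |]; intros x Hx.
    - apply Htail; lra.
    - apply HP; lra.
    - apply Hh'. lra. }
  lra.
Qed.

Lemma RInt_osc_le_of_h_le th s tau :
  lo <= hi -> 0 <= s <= tau -> 0 < tau ->
  (forall x, lo <= x <= hi -> h x <= -1) ->
  (forall x, lo <= x <= hi -> s <= x -> p x <= / tau) ->
  Rabs (RInt (osc th) lo hi) <= tau + 5 / tau.
Proof.
  intros Hlh Hs Htau Hh Htail.
  destruct (clamp_cut lo hi s) as [c [Hc [Hcs Hsc]]]; [lra|lra|].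
  pose proof (RInt_osc_le_head th c ltac:(lra)).
  assert (tail : Rabs (RInt (osc th) c hi) <= 5 / tau).
  { apply RInt_abs_le_of_lt; [lra|apply Rmult_le_pos; [lra|apply Rlt_le, Rinv_0_lt_compat; lra]|].
    intros Hlt. specialize (Hsc Hlt).
    eapply Rle_trans; [apply (RInt_osc_nonstationary th c hi 1); try lra|].
    - right. intros x Hx. apply Hh. lra.
    - pose proof (Htail c ltac:(lra) Hsc). unfold Rdiv. lra. }
  lra.
Qed.

End OscillatoryIntegral.

Lemma cos_signed eps u : eps = 1 \/ eps = -1 -> cos (- eps * u) = cos u.
Proof. intros [-> | ->]; [rewrite <- cos_neg|]; f_equal; ring. Qed.

Section Integrand.

Variables (m l : nat) (sig rho b c : nat -> R) (k : nat) (eps : R).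

Hypothesis sig_nonneg : forall j, (1 <= j <= m)%nat -> 0 <= sig j.
Hypothesis b_pos : forall j, (1 <= j <= m)%nat -> 0 < b j.
Hypothesis c_pos : forall i, (1 <= i <= l)%nat -> 0 < c i.
Hypothesis rho_ge : forall i, (1 <= i <= l)%nat -> rho l <= rho i.
Hypothesis rho_pos : 0 < rho l.
Hypothesis k_range : (1 <= k <= m)%nat.
Hypothesis eps_sign : eps = 1 \/ eps = -1.
Hypothesis sig_le_sig1 : forall j, (1 <= j <= m)%nat -> sig j <= sig 1%nat.
Variable M : R.
Hypothesis b_le_M : forall j, (1 <= j <= m)%nat -> b j <= M.

Definition sqrt_sum x := sum1 (fun j => b j * sqrt (x ^ 2 + sig j)) m.
Definition inv_sqrt_sum x := sum1 (fun j => b j / sqrt (x ^ 2 + sig j)) m.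
Definition decay_sum x := sum1 (fun i => c i * sqrt (rho i - x ^ 2)) l.

Definition phase x := x ^ 2 / 2 + eps * sqrt_sum x.
(* Flipping the phase by [eps] makes [slope = signed_phase' / x] nondecreasing for both signs. *)
Definition signed_phase x := - eps * phase x.
Definition slope x := - eps - inv_sqrt_sum x.
Definition slope' x := x * sum1 (fun j => b j / sqrt (x ^ 2 + sig j) ^ 3) m.
Definition damping x := exp (- decay_sum x).
Definition damping' x := damping x * sum1 (fun i => c i * x / sqrt (rho i - x ^ 2)) l.
Definition weight x := / sqrt (x ^ 2 + sig k).
Definition weight' x := - x / sqrt (x ^ 2 + sig k) ^ 3.

Lemma sq_add_sig_pos j x : (1 <= j <= m)%nat -> 0 < x -> 0 < x ^ 2 + sig j.
Proof. intros Hj Hx. pose proof (sig_nonneg j Hj). pose proof (pow_lt x 2 Hx). lra. Qed.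

Lemma rho_sub_sq_pos i x : (1 <= i <= l)%nat -> x ^ 2 < rho l -> 0 < rho i - x ^ 2.
Proof. intros Hi Hx. pose proof (rho_ge i Hi). lra. Qed.

Lemma sqrt_sum_deriv x : 0 < x -> is_derive sqrt_sum x (x * inv_sqrt_sum x).
Proof.
  intros Hx. unfold sqrt_sum, inv_sqrt_sum. rewrite <- sum1_scal_l.
  apply (is_derive_sum1 (fun j y => b j * sqrt (y ^ 2 + sig j))).
  intros j Hj. pose proof (sqrt_lt_R0 _ (sq_add_sig_pos j x Hj Hx)).
  auto_derive; change (x * (x * 1)) with (x ^ 2); [apply sq_add_sig_pos; assumption|field; lra].
Qed.

Lemma inv_sqrt_sum_deriv x : 0 < x -> is_derive inv_sqrt_sum x (- slope' x).
Proof.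
  intros Hx. unfold inv_sqrt_sum, slope'. rewrite Ropp_mult_distr_l, <- sum1_scal_l.
  apply (is_derive_sum1 (fun j y => b j / sqrt (y ^ 2 + sig j))).
  intros j Hj. pose proof (sq_add_sig_pos j x Hj Hx) as Hu. pose proof (sqrt_lt_R0 _ Hu).
  auto_derive; change (x * (x * 1)) with (x ^ 2); [repeat split; lra|field; lra].
Qed.

Lemma decay_sum_deriv x :
  x ^ 2 < rho l -> is_derive decay_sum x (- sum1 (fun i => c i * x / sqrt (rho i - x ^ 2)) l).
Proof.
  intros Hx. unfold decay_sum.
  rewrite <- (Rmult_1_l (sum1 _ l)), Ropp_mult_distr_l, <- sum1_scal_l.
  apply (is_derive_sum1 (fun i y => c i * sqrt (rho i - y ^ 2))).
  intros i Hi. pose proof (sqrt_lt_R0 _ (rho_sub_sq_pos i x Hi Hx)).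
  auto_derive; change (x * (x * 1)) with (x ^ 2); [apply rho_sub_sq_pos; assumption|].
  change (rho i + - x ^ 2) with (rho i - x ^ 2). field. lra.
Qed.

Lemma signed_phase_deriv x : 0 < x -> is_derive signed_phase x (x * slope x).
Proof.
  intros Hx. pose proof (sqrt_sum_deriv x Hx).
  unfold signed_phase, phase, slope. auto_derive; [eexists; eassumption|].
  rewrite_Derive. destruct eps_sign as [-> | ->]; field.
Qed.

Lemma slope_deriv x : 0 < x -> is_derive slope x (slope' x).
Proof.
  intros Hx. pose proof (inv_sqrt_sum_deriv x Hx).
  unfold slope. auto_derive; [eexists; eassumption|]. rewrite_Derive. ring.
Qed.

Lemma damping_deriv x : x ^ 2 < rho l -> is_derive damping x (damping' x).
Proof.
  intros Hx. pose proof (decay_sum_deriv x Hx).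
  unfold damping', damping. auto_derive; [eexists; eassumption|]. rewrite_Derive. ring.
Qed.

Lemma weight_deriv x : 0 < x -> is_derive weight x (weight' x).
Proof.
  intros Hx. pose proof (sq_add_sig_pos k x k_range Hx) as Hu. pose proof (sqrt_lt_R0 _ Hu).
  unfold weight, weight'.
  auto_derive; change (x * (x * 1)) with (x ^ 2); [repeat split; lra|field; lra].
Qed.

Lemma slope'_continuous x : 0 < x -> continuous slope' x.
Proof.
  intros Hx. unfold slope'. solve_continuous.
  apply pow_nonzero, Rgt_not_eq, sqrt_lt_R0, sq_add_sig_pos; assumption.
Qed.

Lemma damping_continuous x : continuous damping x.
Proof. unfold damping, decay_sum. solve_continuous. Qed.

Lemma damping'_continuous x : x ^ 2 < rho l -> continuous damping' x.
Proof.
  intros Hx. pose proof (damping_continuous x). unfold damping'. solve_continuous.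
  apply Rgt_not_eq, sqrt_lt_R0, rho_sub_sq_pos; assumption.
Qed.

Lemma weight'_continuous x : 0 < x -> continuous weight' x.
Proof.
  intros Hx. unfold weight'. solve_continuous.
  apply pow_nonzero, Rgt_not_eq, sqrt_lt_R0, sq_add_sig_pos; assumption.
Qed.

Lemma inv_sqrt_sum_nonneg x : 0 < x -> 0 <= inv_sqrt_sum x.
Proof.
  intros Hx. apply sum1_nonneg. intros j Hj. apply Rlt_le, Rdiv_lt_0_compat.
  - apply b_pos, Hj.
  - apply sqrt_lt_R0, sq_add_sig_pos; assumption.
Qed.

Lemma slope'_nonneg x : 0 < x -> 0 <= slope' x.
Proof.
  intros Hx. apply Rmult_le_pos; [lra|]. apply sum1_nonneg. intros j Hj.
  apply Rlt_le, Rdiv_lt_0_compat; [apply b_pos, Hj|].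
  apply pow_lt, sqrt_lt_R0, sq_add_sig_pos; assumption.
Qed.

Lemma damping_range x : 0 <= damping x <= 1.
Proof.
  unfold damping. split; [apply Rlt_le, exp_pos|].
  assert (Hdecay : 0 <= decay_sum x).
  { apply sum1_nonneg. intros i Hi. apply Rmult_le_pos; [apply Rlt_le, c_pos, Hi|apply sqrt_pos]. }
  destruct (Rle_lt_or_eq_dec 0 (decay_sum x) Hdecay) as [Hlt|<-].
  - left. rewrite <- exp_0. apply exp_increasing. lra.
  - rewrite Ropp_0, exp_0. lra.
Qed.

Lemma damping'_nonneg x : 0 < x -> x ^ 2 < rho l -> 0 <= damping' x.
Proof.
  intros Hx Hxl. apply Rmult_le_pos; [apply damping_range|]. apply sum1_nonneg. intros i Hi.
  apply Rlt_le, Rdiv_lt_0_compat; [apply Rmult_lt_0_compat; [apply c_pos, Hi|exact Hx]|].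
  apply sqrt_lt_R0, rho_sub_sq_pos; assumption.
Qed.

Lemma weight_pos x : 0 < x -> 0 < weight x.
Proof. intros Hx. apply Rinv_0_lt_compat, sqrt_lt_R0, sq_add_sig_pos; assumption. Qed.

Lemma weight'_nonpos x : 0 < x -> weight' x <= 0.
Proof.
  intros Hx. unfold weight', Rdiv.
  pose proof (pow_lt _ 3 (sqrt_lt_R0 _ (sq_add_sig_pos k x k_range Hx))) as Hu3.
  pose proof (Rinv_0_lt_compat _ Hu3). nra.
Qed.

Lemma le_sqrt_sq_add_sig x : 0 < x -> x <= sqrt (x ^ 2 + sig k).
Proof.
  intros Hx. rewrite <- (sqrt_pow2 x) at 1 by lra. apply sqrt_le_1_alt.
  pose proof (sig_nonneg k k_range). lra.
Qed.

Lemma mul_weight_le_1 x : 0 < x -> x * weight x <= 1.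
Proof.
  intros Hx. pose proof (sqrt_lt_R0 _ (sq_add_sig_pos k x k_range Hx)).
  pose proof (le_sqrt_sq_add_sig x Hx). unfold weight.
  apply (Rmult_le_reg_r (sqrt (x ^ 2 + sig k))); [lra|].
  rewrite Rmult_assoc, Rinv_l by lra. lra.
Qed.

Definition cutoff tau := sqrt (Rmax 0 (tau ^ 2 - sig k)).

Lemma cutoff_range tau : 0 < tau -> 0 <= cutoff tau <= tau.
Proof.
  intros Htau. split; [apply sqrt_pos|].
  apply Rle_trans with (sqrt (tau ^ 2)); [|rewrite sqrt_pow2; lra].
  apply sqrt_le_1_alt. pose proof (sig_nonneg k k_range). pose proof (pow2_ge_0 tau).
  apply Rmax_lub; lra.
Qed.

Lemma weight_le_inv tau x : 0 < tau -> 0 < x -> cutoff tau <= x -> weight x <= / tau.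
Proof.
  intros Htau Hx Hcut. apply Rinv_le_contravar; [exact Htau|].
  rewrite <- (sqrt_pow2 tau) by lra. apply sqrt_le_1_alt.
  assert (Hsq : cutoff tau ^ 2 <= x ^ 2) by (apply pow_incr; split; [apply sqrt_pos|exact Hcut]).
  unfold cutoff in Hsq. rewrite pow2_sqrt in Hsq by apply Rmax_l.
  pose proof (Rmax_r 0 (tau ^ 2 - sig k)). lra.
Qed.

#[local] Hint Resolve signed_phase_deriv slope_deriv damping_deriv weight_deriv
  slope'_continuous damping'_continuous weight'_continuous slope'_nonneg damping'_nonneg
  weight'_nonpos damping_range weight_pos mul_weight_le_1 weight_le_inv cutoff_range Rlt_0_1
  : integrand.

Lemma interval_in_domain lo hi x :
  0 < lo -> hi ^ 2 < rho l -> lo <= x <= hi -> 0 < x /\ x ^ 2 < rho l.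
Proof.
  intros Hlo Hhi Hx. split; [lra|].
  apply Rle_lt_trans with (hi ^ 2); [apply pow_incr; lra|exact Hhi].
Qed.

Lemma RInt_osc_integrand_le th lo hi tau P kap d :
  0 < lo <= hi -> hi ^ 2 < rho l -> 0 < tau -> 0 < d <= 1/2 -> 0 < kap -> 0 <= P ->
  (forall x, lo <= x <= hi -> cutoff tau <= x -> -1/2 <= slope x -> weight x <= P) ->
  (forall x, lo <= x <= hi -> slope x <= 1/2 -> kap * x <= slope' x) ->
  Rabs (RInt (osc signed_phase damping weight th) lo hi)
    <= tau + 10 / tau + 10 * P / d + 2 * P * d / kap.
Proof.
  intros Hlh Hhi Htau Hd Hkap HP0 HP Hslope'.
  apply (RInt_osc_le signed_phase slope slope' damping damping' weight weight' lo hi)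
    with (s := cutoff tau);
    auto with integrand; try lra;
    intros x Hx; destruct (interval_in_domain lo hi x ltac:(lra) Hhi Hx) as [x_pos x_sq];
    auto with integrand.
Qed.

Lemma RInt_osc_integrand_le_of_slope_le th lo hi :
  0 < lo <= hi -> hi ^ 2 < rho l -> (forall x, lo <= x <= hi -> slope x <= -1) ->
  Rabs (RInt (osc signed_phase damping weight th) lo hi) <= 6.
Proof.
  intros Hlh Hhi Hslope. replace 6 with (1 + 5 / 1) by field.
  apply (RInt_osc_le_of_h_le signed_phase slope slope' damping damping' weight weight' lo hi)
    with (s := cutoff 1);
    auto with integrand; try lra;
    intros x Hx; destruct (interval_in_domain lo hi x ltac:(lra) Hhi Hx) as [x_pos x_sq];
    auto with integrand.
Qed.

Lemma slope_le_neg1 x : eps = 1 -> 0 < x -> slope x <= -1.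
Proof. intros -> Hx. pose proof (inv_sqrt_sum_nonneg x Hx). unfold slope. lra. Qed.

Lemma weight_le_of_slope_ge x :
  eps = -1 -> 0 < x -> -1/2 <= slope x -> weight x <= 3 / (2 * b k).
Proof.
  intros Heps Hx Hslope. unfold slope in Hslope. rewrite Heps in Hslope.
  pose proof (b_pos k k_range) as Hbk.
  assert (b k * weight x <= inv_sqrt_sum x).
  { apply (sum1_ge_term (fun j => b j / sqrt (x ^ 2 + sig j))); [|exact k_range].
    intros j Hj. apply Rlt_le, Rdiv_lt_0_compat; [apply b_pos, Hj|].
    apply sqrt_lt_R0, sq_add_sig_pos; assumption. }
  apply (Rmult_le_reg_l (b k)); [exact Hbk|].
  replace (b k * (3 / (2 * b k))) with (3 / 2) by (field; lra). lra.
Qed.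

Lemma slope'_ge_of_sig x :
  eps = -1 -> 0 < x -> x ^ 2 < rho l -> slope x <= 1/2 ->
  / (2 * (1 + sig 1%nat + rho l)) * x <= slope' x.
Proof.
  intros Heps Hx Hxl Hslope. unfold slope in Hslope. rewrite Heps in Hslope.
  set (Q := 1 + sig 1%nat + rho l).
  assert (HQ : 0 < Q) by (unfold Q; pose proof (sig_nonneg 1 ltac:(lia)); nra).
  assert (Hsum : / Q * inv_sqrt_sum x <= sum1 (fun j => b j / sqrt (x ^ 2 + sig j) ^ 3) m).
  { unfold inv_sqrt_sum. rewrite <- sum1_scal_l. apply sum1_le. intros j Hj.
    pose proof (sq_add_sig_pos j x Hj Hx) as Hu. pose proof (sqrt_lt_R0 _ Hu).
    pose proof (b_pos j Hj). pose proof (sig_le_sig1 j Hj).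
    replace (b j / sqrt (x ^ 2 + sig j) ^ 3)
      with (/ (x ^ 2 + sig j) * (b j / sqrt (x ^ 2 + sig j)))
      by (rewrite <- (sqrt_sqrt (x ^ 2 + sig j)) at 1 by lra; field; lra).
    apply Rmult_le_compat_r; [apply Rlt_le, Rdiv_lt_0_compat; lra|].
    apply Rinv_le_contravar; [exact Hu|unfold Q; lra]. }
  unfold slope'. rewrite (Rmult_comm _ x). apply Rmult_le_compat_l; [lra|].
  apply Rle_trans with (/ Q * inv_sqrt_sum x); [|exact Hsum].
  rewrite Rinv_mult, (Rmult_comm (/ 2)). apply Rmult_le_compat_l; [|lra].
  apply Rlt_le, Rinv_0_lt_compat, HQ.
Qed.

Lemma slope'_ge_of_b x :
  eps = -1 -> 0 < x -> slope x <= 1/2 -> / (8 * INR m ^ 3 * M ^ 2) * x <= slope' x.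
Proof.
  intros Heps Hx Hslope. unfold slope in Hslope. rewrite Heps in Hslope.
  assert (Hm : 1 <= INR m) by (apply (le_INR 1); lia).
  destruct (sum1_exists_ge (fun j => b j / sqrt (x ^ 2 + sig j)) m (/ (2 * INR m)))
    as [j [Hj Hw]]; [lia|unfold inv_sqrt_sum in Hslope; field_simplify; lra|].
  pose proof (sqrt_lt_R0 _ (sq_add_sig_pos j x Hj Hx)) as Hu.
  pose proof (b_pos j Hj) as Hbj. pose proof (b_le_M j Hj) as HbM.
  set (w := b j / sqrt (x ^ 2 + sig j)) in Hw.
  assert (Hterm : b j / sqrt (x ^ 2 + sig j) ^ 3 = w ^ 3 / b j ^ 2)
    by (unfold w; field; lra).
  assert (Hbound : / (8 * INR m ^ 3 * M ^ 2) <= w ^ 3 / b j ^ 2).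
  { replace (/ (8 * INR m ^ 3 * M ^ 2)) with ((/ (2 * INR m)) ^ 3 / M ^ 2) by (field; lra).
    unfold Rdiv. apply Rmult_le_compat.
    - apply pow_le, Rlt_le, Rinv_0_lt_compat. lra.
    - apply Rlt_le, Rinv_0_lt_compat, pow_lt. lra.
    - apply pow_incr. split; [apply Rlt_le, Rinv_0_lt_compat; lra|exact Hw].
    - apply Rinv_le_contravar; [apply pow_lt; lra|apply pow_incr; lra]. }
  unfold slope'. rewrite (Rmult_comm _ x). apply Rmult_le_compat_l; [lra|].
  eapply Rle_trans; [exact Hbound|]. rewrite <- Hterm.
  apply (sum1_ge_term (fun j => b j / sqrt (x ^ 2 + sig j) ^ 3)); [|exact Hj].
  intros i Hi. apply Rlt_le, Rdiv_lt_0_compat; [apply b_pos, Hi|].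
  apply pow_lt, sqrt_lt_R0, sq_add_sig_pos; assumption.
Qed.

Lemma one_le_Rpower x y : 1 <= x -> 0 <= y -> 1 <= Rpower x y.
Proof.
  intros Hx Hy. apply Rle_trans with (Rpower x 0); [rewrite Rpower_O; lra|].
  apply Rle_Rpower; assumption.
Qed.

Definition sig_scale := Rpower (1 + sig 1%nat + rho l) (1/4).
Definition b_scale := Rpower (INR m) (3/2) * / b k * M.

Lemma sig_scale_ge_1 : 1 <= sig_scale.
Proof. apply one_le_Rpower; [pose proof (sig_nonneg 1 ltac:(lia))|]; lra. Qed.

Lemma b_scale_ge_1 : 1 <= b_scale.
Proof.
  pose proof (b_pos k k_range). pose proof (b_le_M k k_range).
  assert (1 <= Rpower (INR m) (3/2)) by (apply one_le_Rpower; [apply (le_INR 1)|]; lia || lra).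
  assert (1 <= / b k * M).
  { apply (Rmult_le_reg_l (b k)); [lra|]. rewrite <- Rmult_assoc, Rinv_r; lra. }
  unfold b_scale. rewrite Rmult_assoc. nra.
Qed.

(* With t = Q^(1/4): tau = t, P = 1/t, d = 1/(2 t^2) and kap = 1/(2 Q) make all terms O(t). *)
Lemma RInt_osc_integrand_le_sig th lo hi :
  eps = -1 -> 0 < lo <= hi -> hi ^ 2 < rho l ->
  Rabs (RInt (osc signed_phase damping weight th) lo hi) <= 33 * sig_scale.
Proof.
  intros Heps Hlh Hhi. pose proof sig_scale_ge_1 as Ht.
  unfold sig_scale in *. set (Q := 1 + sig 1%nat + rho l) in *. set (t := Rpower Q (1/4)) in *.
  assert (HQ : 1 <= Q) by (unfold Q; pose proof (sig_nonneg 1 ltac:(lia)); lra).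
  assert (Ht4 : t ^ 4 = Q).
  { unfold t. rewrite <- Rpower_pow, Rpower_mult by (apply exp_pos).
    replace (1 / 4 * INR 4) with 1 by (simpl; lra). apply Rpower_1. lra. }
  eapply Rle_trans.
  - apply (RInt_osc_integrand_le th lo hi t (/ t) (/ (2 * Q)) (/ (2 * t ^ 2))); try lra.
    + split; [apply Rinv_0_lt_compat; nra|].
      apply Rle_trans with (/ 2); [apply Rinv_le_contravar; nra|lra].
    + apply Rinv_0_lt_compat. lra.
    + apply Rlt_le, Rinv_0_lt_compat. lra.
    + intros x Hx Hcut _. apply weight_le_inv; lra.
    + intros x Hx. apply slope'_ge_of_sig; [exact Heps|lra|].
      apply (interval_in_domain lo hi x); lra.
  - rewrite <- Ht4.
    replace (10 * / t / / (2 * t ^ 2)) with (20 * t) by (field; lra).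
    replace (2 * / t * / (2 * t ^ 2) / / (2 * t ^ 4)) with (2 * t) by (field; lra).
    assert (10 / t <= 10 * t).
    { unfold Rdiv. apply Rmult_le_compat_l; [lra|].
      apply Rle_trans with 1; [rewrite <- Rinv_1; apply Rinv_le_contravar|]; lra. }
    fold t. lra.
Qed.

Lemma Rpower_3_2_sq x : 0 < x -> Rpower x (3/2) ^ 2 = x ^ 3.
Proof.
  intros Hx. rewrite <- Rpower_pow, Rpower_mult by apply exp_pos.
  replace (3 / 2 * INR 2) with (INR 3) by (simpl; lra). apply Rpower_pow, Hx.
Qed.

(* With [kap = b_step ^ 2], this step balances [10 P / d] against [2 P d / kap]. *)
Definition b_step := Rmin (/ (3 * Rpower (INR m) (3/2) * M)) (1/2).

Lemma b_step_range : 0 < b_step <= 1/2.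
Proof.
  pose proof (b_pos k k_range). pose proof (b_le_M k k_range).
  assert (1 <= Rpower (INR m) (3/2)) by (apply one_le_Rpower; [apply (le_INR 1)|]; lia || lra).
  unfold b_step. split; [|apply Rmin_r].
  apply Rmin_glb_lt; [apply Rinv_0_lt_compat|]; nra.
Qed.

Lemma b_step_sq_le : b_step ^ 2 <= / (8 * INR m ^ 3 * M ^ 2).
Proof.
  pose proof (b_pos k k_range). pose proof (b_le_M k k_range).
  assert (Hm : 1 <= INR m) by (apply (le_INR 1); lia).
  pose proof (Rpower_3_2_sq (INR m) ltac:(lra)) as Hr2.
  set (r := Rpower (INR m) (3/2)) in *.
  assert (1 <= r) by (apply one_le_Rpower; lra).
  apply Rle_trans with ((/ (3 * r * M)) ^ 2).
  - apply pow_incr. pose proof b_step_range. split; [lra|apply Rmin_l].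
  - rewrite pow_inv. apply Rinv_le_contravar.
    + apply Rmult_lt_0_compat; [apply Rmult_lt_0_compat|apply pow_lt]; try apply pow_lt; lra.
    + replace ((3 * r * M) ^ 2) with (9 * r ^ 2 * M ^ 2) by ring. rewrite Hr2.
      pose proof (pow_le (INR m) 3 ltac:(lra)). pose proof (pow2_ge_0 M). nra.
Qed.

Lemma weight_cap_div_b_step : Rmin 1 (3 / (2 * b k)) / b_step <= 9/2 * b_scale.
Proof.
  pose proof b_scale_ge_1. pose proof (b_pos k k_range). pose proof (b_le_M k k_range).
  assert (1 <= Rpower (INR m) (3/2)) by (apply one_le_Rpower; [apply (le_INR 1)|]; lia || lra).
  assert (HP : 0 <= Rmin 1 (3 / (2 * b k)) <= 1 /\ Rmin 1 (3 / (2 * b k)) <= 3 / (2 * b k)).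
  { split; [split|apply Rmin_r]; [|apply Rmin_l].
    apply Rmin_glb; [lra|]. apply Rlt_le, Rdiv_lt_0_compat; lra. }
  unfold b_step, Rmin at 2. destruct Rle_dec.
  - replace (9 / 2 * b_scale) with (3 / (2 * b k) * (3 * Rpower (INR m) (3/2) * M))
      by (unfold b_scale; field; lra).
    unfold Rdiv at 1. rewrite Rinv_inv. apply Rmult_le_compat_r; [nra|lra].
  - replace (Rmin 1 (3 / (2 * b k)) / (1 / 2)) with (2 * Rmin 1 (3 / (2 * b k))) by field.
    lra.
Qed.

Lemma RInt_osc_integrand_le_b th lo hi :
  eps = -1 -> 0 < lo <= hi -> hi ^ 2 < rho l ->
  Rabs (RInt (osc signed_phase damping weight th) lo hi) <= 65 * b_scale.
Proof.
  intros Heps Hlh Hhi.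
  pose proof b_step_range. pose proof b_step_sq_le. pose proof weight_cap_div_b_step.
  pose proof b_scale_ge_1. pose proof (b_pos k k_range).
  set (P := Rmin 1 (3 / (2 * b k))) in *.
  assert (0 <= P) by (apply Rmin_glb; [lra|apply Rlt_le, Rdiv_lt_0_compat; lra]).
  eapply Rle_trans.
  - apply (RInt_osc_integrand_le th lo hi 1 P (b_step ^ 2) b_step); try lra.
    + apply pow_lt. lra.
    + intros x Hx Hcut Hslope. apply Rmin_glb.
      * rewrite <- Rinv_1. apply weight_le_inv; lra.
      * apply weight_le_of_slope_ge; lra.
    + intros x Hx Hslope. eapply Rle_trans; [|apply slope'_ge_of_b; lra].
      apply Rmult_le_compat_r; lra.
  - replace (1 + 10 / 1 + 10 * P / b_step + 2 * P * b_step / b_step ^ 2)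
      with (11 + 12 * (P / b_step)) by (field; lra).
    lra.
Qed.

Lemma RInt_osc_integrand_le_min th lo hi :
  0 < lo <= hi -> hi ^ 2 < rho l ->
  Rabs (RInt (osc signed_phase damping weight th) lo hi) <= 65 * Rmin sig_scale b_scale.
Proof.
  intros Hlh Hhi. pose proof sig_scale_ge_1. pose proof b_scale_ge_1.
  destruct eps_sign as [Heps|Heps].
  - eapply Rle_trans; [apply RInt_osc_integrand_le_of_slope_le; try assumption|].
    + intros x Hx. apply slope_le_neg1; lra.
    + assert (1 <= Rmin sig_scale b_scale) by (apply Rmin_glb; lra). lra.
  - pose proof (RInt_osc_integrand_le_sig th lo hi Heps Hlh Hhi).
    pose proof (RInt_osc_integrand_le_b th lo hi Heps Hlh Hhi).
    unfold Rmin. destruct Rle_dec; lra.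
Qed.

Lemma signed_phase_continuous x : continuous signed_phase x.
Proof.
  assert (continuous sqrt_sum x) by (unfold sqrt_sum; solve_continuous).
  unfold signed_phase, phase. solve_continuous.
Qed.

Lemma osc_integrand_abs_le_1 th x : 0 <= x -> Rabs (osc signed_phase damping weight th x) <= 1.
Proof.
  intros Hx. apply Rabs_cos_mul_le. pose proof (damping_range x).
  destruct (Rle_lt_or_eq_dec 0 x Hx) as [Hpos|<-]; [|rewrite Rmult_0_l; lra].
  pose proof (weight_pos x Hpos). pose proof (mul_weight_le_1 x Hpos).
  replace (x * (damping x * weight x)) with (damping x * (x * weight x)) by ring.
  split; [apply Rmult_le_pos|]; nra.
Qed.

(* If [sig k = 0], [weight] takes the junk value [/ 0 = 0] at 0, but [x * weight x = 1]
   on the open interval. *)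
Lemma ex_RInt_osc_integrand th :
  ex_RInt (osc signed_phase damping weight th) 0 (sqrt (rho l)).
Proof.
  pose proof (sig_nonneg k k_range) as Hsk.
  destruct (Rle_lt_or_eq_dec 0 (sig k) Hsk) as [Hsk_pos|Hsk0].
  - apply (ex_RInt_continuous (V := R_CompleteNormedModule)). intros x _.
    pose proof (signed_phase_continuous x). pose proof (damping_continuous x).
    assert (0 < x ^ 2 + sig k) by (pose proof (pow2_ge_0 x); lra).
    unfold osc, weight. solve_continuous.
    apply Rgt_not_eq, sqrt_lt_R0. assumption.
  - apply (ex_RInt_ext (fun x => cos (signed_phase x + th) * damping x)).
    + intros x Hx. rewrite Rmin_left, Rmax_right in Hx by apply sqrt_pos.
      unfold osc, weight. rewrite <- Hsk0, Rplus_0_r, sqrt_pow2 by lra.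
      match goal with |- ?u = ?v => change (@eq R u v) end. field. lra.
    + apply (ex_RInt_continuous (V := R_CompleteNormedModule)). intros x _.
      pose proof (signed_phase_continuous x). pose proof (damping_continuous x).
      solve_continuous.
Qed.

(* The oscillatory estimates need 0 < x and x^2 < rho l (the damping is not differentiable
   at sqrt (rho l)), so e-neighbourhoods of both endpoints are bounded trivially. *)
Lemma RInt_osc_integrand_whole_le th :
  Rabs (RInt (osc signed_phase damping weight th) 0 (sqrt (rho l)))
    <= 65 * Rmin sig_scale b_scale.
Proof.
  set (L := sqrt (rho l)). set (f := osc signed_phase damping weight th).
  assert (HL : 0 < L) by (apply sqrt_lt_R0, rho_pos).
  assert (HL2 : L ^ 2 = rho l) by (apply pow2_sqrt; lra).
  pose proof (ex_RInt_osc_integrand th) as Hex. fold L f in Hex.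
  assert (end_le : forall u v, 0 <= u <= v -> v <= L -> Rabs (RInt f u v) <= (v - u) * 1).
  { intros u v Huv HvL. apply abs_RInt_le_const; [lra| |].
    - apply (ex_RInt_Chasles_1 f u v L); [lra|].
      apply (ex_RInt_Chasles_2 f 0 u L); [lra|exact Hex].
    - intros x Hx. apply osc_integrand_abs_le_1. lra. }
  apply Rle_plus_epsilon. intros eta Heta.
  set (e := Rmin (eta / 2) (L / 4)).
  assert (He : 0 < e /\ e <= eta / 2 /\ e <= L / 4).
  { unfold e. split; [apply Rmin_glb_lt; lra|split; [apply Rmin_l|apply Rmin_r]]. }
  assert (interior : Rabs (RInt f e (L - e)) <= 65 * Rmin sig_scale b_scale).
  { apply RInt_osc_integrand_le_min; [lra|].
    rewrite <- HL2. simpl. nra. }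
  pose proof (RInt_abs_le_Chasles f 0 e L ltac:(lra) Hex).
  pose proof (RInt_abs_le_Chasles f e (L - e) L ltac:(lra)
    (ex_RInt_Chasles_2 f 0 e L ltac:(lra) Hex)).
  pose proof (end_le 0 e ltac:(lra) ltac:(lra)).
  pose proof (end_le (L - e) L ltac:(lra) ltac:(lra)).
  lra.
Qed.

Lemma integrand_re x :
  fst (integrand m l k sig rho b c eps x) = osc signed_phase damping weight 0 x.
Proof.
  unfold integrand, cis, osc, signed_phase, phase, sqrt_sum.
  set (A := x ^ 2 / 2). set (B := eps * sum1 _ m). cbn [fst snd Cmult RtoC].
  rewrite <- cos_plus, Rplus_0_r, cos_signed by exact eps_sign.
  unfold damping, decay_sum, weight, Rdiv. ring.
Qed.

Lemma integrand_im x :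
  snd (integrand m l k sig rho b c eps x)
  = osc signed_phase damping weight (eps * (PI / 2)) x.
Proof.
  unfold integrand, cis, osc, signed_phase, phase, sqrt_sum.
  set (A := x ^ 2 / 2). set (B := eps * sum1 _ m). cbn [fst snd Cmult RtoC].
  replace (- eps * (A + B) + eps * (PI / 2)) with (- eps * - (PI / 2 - (A + B))) by ring.
  rewrite cos_signed, cos_neg, cos_shift, sin_plus by exact eps_sign.
  unfold damping, decay_sum, weight, Rdiv. ring.
Qed.

Lemma Cmod_RInt_integrand_le :
  Cmod (RInt (V := C_R_CompleteNormedModule) (integrand m l k sig rho b c eps) 0 (sqrt (rho l)))
    <= 130 * Rmin sig_scale b_scale.
Proof.
  set (L := sqrt (rho l)). set (f th := osc signed_phase damping weight th).
  assert (parts : is_RInt (V := C_R_CompleteNormedModule) (integrand m l k sig rho b c eps) 0 L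
                    (RInt (f 0) 0 L, RInt (f (eps * (PI / 2))) 0 L)).
  { apply (is_RInt_fct_extend_pair (U := R_NormedModule) (V := R_NormedModule)).
    - apply (is_RInt_ext (f 0)); [intros x _; symmetry; apply integrand_re|].
      apply (RInt_correct (V := R_CompleteNormedModule)), ex_RInt_osc_integrand.
    - apply (is_RInt_ext (f (eps * (PI / 2)))); [intros x _; symmetry; apply integrand_im|].
      apply (RInt_correct (V := R_CompleteNormedModule)), ex_RInt_osc_integrand. }
  rewrite (is_RInt_unique _ _ _ _ parts).
  eapply Rle_trans; [apply Cmod_2Rmax|]. cbn [fst snd].
  assert (sqrt 2 <= 2).
  { apply Rle_trans with (sqrt (2 * 2)); [apply sqrt_le_1_alt; lra|].
    rewrite sqrt_square; lra. }
  assert (bound : forall th, Rabs (RInt (f th) 0 L) <= 65 * Rmin sig_scale b_scale)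
    by (intro; apply RInt_osc_integrand_whole_le).
  pose proof (sqrt_pos 2).
  pose proof (Rmax_lub _ _ _ (bound 0) (bound (eps * (PI / 2)))).
  pose proof (Rle_trans _ _ _ (Rabs_pos _) (Rmax_l (Rabs (RInt (f 0) 0 L))
                                                   (Rabs (RInt (f (eps * (PI / 2))) 0 L)))).
  nra.
Qed.

End Integrand.

Theorem lemma7p5 :
  exists C0 : R,
  forall (m l : nat) (sigma rho b c : nat -> R) (k : nat) (eps : R),
    (1 <= m)%nat -> (1 <= l)%nat ->
    (forall j, (1 <= j < m)%nat -> sigma (S j) <= sigma j) ->
    0 <= sigma m ->
    (forall i, (1 <= i < l)%nat -> rho (S i) <= rho i) ->
    0 < rho l ->
    (forall j, (1 <= j <= m)%nat -> 0 < b j) ->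
    (forall i, (1 <= i <= l)%nat -> 0 < c i) ->
    (1 <= k <= m)%nat ->
    (eps = 1 \/ eps = -1) ->
    Cmod (RInt (V := C_R_CompleteNormedModule)
            (integrand m l k sigma rho b c eps) 0 (sqrt (rho l)))
    <= C0 * Rmin (Rpower (1 + sigma 1%nat + rho l) (1/4))
                 (Rpower (INR m) (3/2) * / b k * max1 b m).
Proof.
  exists 130.
  intros m l sigma rho b c k eps Hm Hl Hsigma Hsigma_m Hrho Hrho_l Hb Hc Hk Heps.
  assert (sigma_le : forall j, (1 <= j <= m)%nat -> sigma m <= sigma j <= sigma 1%nat)
    by (intros j Hj; split; apply (nonincreasing_seq_le sigma m Hsigma); lia).
  apply Cmod_RInt_integrand_le; try assumption.
  - intros j Hj. pose proof (sigma_le j Hj). lra.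
  - intros i Hi. apply (nonincreasing_seq_le rho l Hrho); lia.
  - intros j Hj. apply sigma_le, Hj.
  - intros j Hj. apply max1_ge, Hj.
Qed.
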